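(* Let $\Gamma$ be a cofinite graph and let $\overline{\Gamma}$ denote its (Hausdorff uniform) completion, which is again a cofinite graph. The following statements are equivalent: (1) $\Gamma$ is cofinitely connected; (2) $\Gamma$ is not the uniform sum of two disjoint nonempty subgraphs; (3) $\overline{\Gamma}$ is cofinitely connected.
   Context: A graph $\Gamma$ is a set $\Gamma=V(\Gamma)\sqcup E(\Gamma)$ (vertices and edges) together with maps $s,t\colon E(\Gamma)\to V(\Gamma)$ and an involution $e\mapsto\overline e$ of $E(\Gamma)$ without fixed points such that $s(\overline e)=t(e)$ and $t(\overline e)=s(e)$. A subgraph is a subset closed under $s$, $t$ and $e\mapsto \overline e$. An equivalence relation $R$ on a graph $\Gamma$ is compatible if $R\subseteq (V(\Gamma)\times V(\Gamma))\cup(E(\Gamma)\times E(\Gamma))$, $(e,e')\in R$ implies $(s(e),s(e')),(t(e),t(e')),(\overline e,\overline{e'})\in R$, and $(e,\overline e)\notin R$ for every edge $e$; then the quotient $\Gamma/R$ is a graph. A cofinite entourage of a uniform space is an entourage that is an equivalence relation with finitely many equivalence classes. A cofinite graph is a graph equipped with a Hausdorff uniform structure in which the compatible cofinite entourages form a fundamental system of entourages. A path in a graph is a finite sequence of edges $e_1\cdots e_n$ with $t(e_i)=s(e_{i+1})$; a graph is path connected if any two vertices are joined by a path. A cofinite graph $\Gamma$ is cofinitely connected if $\Gamma/R$ is path connected for every compatible cofinite entourage $R$ of $\Gamma$. $\Gamma$ is the uniform sum of two disjoint subgraphs $\Gamma_1,\Gamma_2$ if $\Gamma=\Gamma_1\cup\Gamma_2$,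 $\Gamma_1\cap\Gamma_2=\emptyset$, and a subset $W\subseteq\Gamma\times\Gamma$ is an entourage of $\Gamma$ iff $W\supseteq W_1\cup W_2$ for some entourages $W_i$ of $\Gamma_i$ (with the subspace uniformities). *)

From HB Require Import structures.
From mathcomp Require Import all_boot all_order all_algebra.
From mathcomp Require Import all_classical all_reals all_analysis.

Set Implicit Arguments.
Unset Strict Implicit.
Unset Printing Implicit Defensive.

Local Open Scope classical_set_scope.

(** A graph on a carrier [T] (= V ⊔ E): [is_edge] selects E, the other
    elements are the vertices. [src], [tgt], [rev] are only meaningful on
    edges. *)
Record graph (T : Type) := Graph {
  is_edge : T -> Prop;
  src : T -> T;
  tgt : T -> T;
  rev : T -> T;
  graph_ax : forall e, is_edge e ->
    ~ is_edge (src e) /\ ~ is_edge (tgt e) /\ is_edge (rev e) /\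
    rev (rev e) = e /\ rev e <> e /\
    src (rev e) = tgt e /\ tgt (rev e) = src e
}.

Section CofiniteGraphs.
Variable T : uniformType.
Variable G : graph T.

Definition subgraph (A : set T) : Prop :=
  forall e, A e -> is_edge G e ->
    [/\ A (src G e), A (tgt G e) & A (rev G e)].

Definition equiv_rel (R : set (T * T)) : Prop :=
  [/\ forall x, R (x, x),
      (forall x y, R (x, y) -> R (y, x)) &
      (forall x y z, R (x, y) -> R (y, z) -> R (x, z))].

(** compatible equivalence relation (so that Γ/R is a graph) *)
Definition compatible (R : set (T * T)) : Prop :=
  [/\ equiv_rel R,
      (forall x y, R (x, y) -> (is_edge G x <-> is_edge G y)),
      (forall e e', is_edge G e -> R (e, e') ->
         [/\ R (src G e, src G e'), R (tgt G e, tgt G e')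
           & R (rev G e, rev G e')]) &
      (forall e, is_edge G e -> ~ R (e, rev G e))].

Definition cofinite_entourage (R : set (T * T)) : Prop :=
  [/\ entourage R, equiv_rel R &
      finite_set (range (fun x : T => [set y | R (x, y)]))].

Definition cofinite_graph : Prop :=
  hausdorff_space T /\
  forall W, entourage W ->
    exists R, [/\ cofinite_entourage R, compatible R & R `<=` W].

(** [qwalk R x es y]: the edge sequence [es] induces a path in Γ/R from the
    class of vertex [x] to the class of vertex [y] (edges of Γ/R are the
    R-classes of edges, with s[e] = [s e], t[e] = [t e]). *)
Fixpoint qwalk (R : set (T * T)) (x : T) (es : list T) (y : T) : Prop :=
  match es with
  | nil => R (x, y)
  | e :: es' => is_edge G e /\ R (x, src G e) /\ qwalk R (tgt G e) es' y
  end.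

Definition quotient_path_connected (R : set (T * T)) : Prop :=
  forall x y, ~ is_edge G x -> ~ is_edge G y -> exists es, qwalk R x es y.

Definition cofinitely_connected : Prop :=
  forall R, cofinite_entourage R -> compatible R -> quotient_path_connected R.

Definition sub_entourage (A : set T) (W : set (T * T)) : Prop :=
  exists2 V, entourage V & W = V `&` (A `*` A).

Definition uniform_sum (A1 A2 : set T) : Prop :=
  [/\ subgraph A1, subgraph A2, A1 `|` A2 = setT, A1 `&` A2 = set0 &
      forall W : set (T * T), entourage W <->
        exists W1 W2, [/\ sub_entourage A1 W1, sub_entourage A2 W2
                        & W1 `|` W2 `<=` W]].

End CofiniteGraphs.

(** [G'] on [T'] together with [i] is a (Hausdorff uniform) completion of the
    cofinite graph [G] on [T], carrying its (unique) cofinite graph structure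
    extending that of [G]: [i] is an injective graph morphism and a uniform
    embedding with dense image into a complete Hausdorff uniform space. *)
Definition is_completion (T T' : uniformType) (G : graph T) (G' : graph T')
    (i : T -> T') : Prop :=
  injective i /\
  [/\ (forall x, is_edge G' (i x) <-> is_edge G x),
      (forall e, is_edge G e ->
         [/\ i (src G e) = src G' (i e), i (tgt G e) = tgt G' (i e)
           & i (rev G e) = rev G' (i e)]) &
      (forall W : set (T * T), entourage W <->
         exists2 W' : set (T' * T'), entourage W' &
           forall x y, W' (i x, i y) -> W (x, y))] /\
  [/\ (forall (z : T') (W' : set (T' * T')), entourage W' ->
         exists x, W' (z, i x)),
      (forall F : set_system T', ProperFilter F -> cauchy F ->
         exists z : T', F --> z) &
      cofinite_graph G'].

From Pilot Require Import Defs.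
From HB Require Import structures.
From mathcomp Require Import all_boot all_order all_algebra.
From mathcomp Require Import all_classical all_reals all_analysis.

(** If a quotient [Γ/R] by a compatible cofinite entourage is disconnected,
    the set of vertices reachable from a fixed vertex, together with the edges
    leaving them, is [R]-saturated; so [R] lies inside the partition relation
    of this set and its complement, which is therefore an entourage, and Γ is
    their uniform sum. Conversely, the partition relation of a uniform sum
    contains a compatible cofinite entourage, and no walk in that quotient
    leaves a part. Compatible cofinite entourages of the completion pull back
    along the embedding to ones of Γ, and walks in a quotient of the
    completion can be moved back into Γ since the embedding has dense image. *)

Set Implicit Arguments.
Unset Strict Implicit.
Unset Printing Implicit Defensive.

Local Open Scope classical_set_scope.

Section QuotientWalks.
Variables (T : uniformType) (G : graph T).

Lemma qwalk_snoc (R : set (T * T)) (x : T) (es : seq T) (v e : T) :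
  Defs.equiv_rel R -> qwalk G R x es v -> is_edge G e -> R (v, src G e) ->
  qwalk G R x (es ++ [:: e]) (tgt G e).
Proof.
move=> [Rr _ Rt]; elim: es x => [|f es IH] x /=.
  by move=> Rxv He Rve; split=> //; split; [exact: Rt Rxv Rve | exact: Rr].
by move=> [Hf [Rxf Hw]] He Rve; split=> //; split=> //; exact: IH.
Qed.

Lemma qwalk_ends (R : set (T * T)) (a : T) (es : seq T) (b a0 b0 : T) :
  Defs.equiv_rel R -> qwalk G R a es b -> R (a0, a) -> R (b, b0) ->
  qwalk G R a0 es b0.
Proof.
move=> [Rr _ Rt]; elim: es a a0 => [|f es IH] a a0 /=.
  by move=> Rab Ra Rb; exact: Rt Ra (Rt _ _ _ Rab Rb).
move=> [Hf [Raf Hw]] Ra Rb; split=> //; split; first exact: Rt Ra Raf.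
exact: IH Hw (Rr _) Rb.
Qed.

Lemma qwalk_vertex (R : set (T * T)) (a : T) (es : seq T) (b : T) :
  compatible G R -> ~ is_edge G a -> qwalk G R a es b -> ~ is_edge G b.
Proof.
move=> [_ Re _ _]; elim: es a => [|f es IH] a /=.
  by move=> Ha Rab Hb; apply: Ha; apply/(Re _ _ Rab).
by move=> _ [Hf [_ Hw]]; apply: IH Hw; have [_ []] := graph_ax Hf.
Qed.

Lemma qwalk_closed (R : set (T * T)) (A : set T) (x : T) (es : seq T) (y : T) :
  (forall a b, R (a, b) -> A a -> A b) ->
  (forall e, is_edge G e -> A (src G e) -> A (tgt G e)) ->
  qwalk G R x es y -> A x -> A y.
Proof.
move=> AR Aedge; elim: es x => [|e es IH] x /=; first exact: AR.
by move=> [He [Rxs Hw]] Ax; apply: (IH _ Hw); apply: Aedge He (AR _ _ Rxs Ax).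
Qed.

End QuotientWalks.

Section UniformSums.
Variables (T : uniformType) (G : graph T).

Lemma uniform_sumE (A1 A2 : set T) :
  uniform_sum G A1 A2 <->
  [/\ subgraph G A1, subgraph G A2, A1 `|` A2 = setT, A1 `&` A2 = set0
    & entourage (A1 `*` A1 `|` A2 `*` A2)].
Proof.
split=> -[S1 S2 HU HD HW]; split=> //.
- apply/HW; exists (A1 `*` A1), (A2 `*` A2); split=> //.
  + by exists setT; [exact: entourageT | rewrite setTI].
  + by exists setT; [exact: entourageT | rewrite setTI].
- move=> W; split.
  + move=> HWe; exists (W `&` (A1 `*` A1)), (W `&` (A2 `*` A2)).
    by split; [exists W | exists W | move=> p [[]|[]]].
  + move=> [W1 [W2 [[V1 HV1 ->] [V2 HV2 ->] Hs]]].
    apply: filterS (filterI (filterI HV1 HV2) HW).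
    by move=> p [[v1 v2] [A1p|A2p]]; apply: Hs; [left|right].
Qed.

Lemma entourage_saturated_partition (R : set (T * T)) (A : set T) :
  entourage R -> (forall a b, R (a, b) -> R (b, a)) ->
  (forall a b, R (a, b) -> A a -> A b) ->
  entourage (A `*` A `|` (~` A) `*` (~` A)).
Proof.
move=> HR Rs AR; apply: filterS HR => -[a b] Rab.
have [Aa|NAa] := pselect (A a); [left|right]; split=> //=.
- exact: AR Rab Aa.
- by move=> Ab; apply: NAa; exact: AR (Rs _ _ Rab) Ab.
Qed.

Lemma subgraph_vertex (A : set T) :
  subgraph G A -> A !=set0 -> exists2 v, A v & ~ is_edge G v.
Proof.
move=> SA [a Aa]; have [Ha|] := pselect (is_edge G a); last by exists a.
have [As _ _] := SA a Aa Ha; exists (src G a) => //.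
by have [] := graph_ax Ha.
Qed.

Lemma cofinitely_connected_no_uniform_sum (A1 A2 : set T) :
  cofinite_graph G -> cofinitely_connected G ->
  A1 !=set0 -> A2 !=set0 -> ~ uniform_sum G A1 A2.
Proof.
move=> [_ Hcg] CC A1n0 A2n0 /uniform_sumE[S1 S2 HU HD Hpart].
have disj z : A1 z -> A2 z -> False.
  by move=> h1 h2; have : (A1 `&` A2) z by []; rewrite HD.
have [R [HRc HRcomp HRsub]] := Hcg _ Hpart.
have A1R a b : R (a, b) -> A1 a -> A1 b.
  by move=> /HRsub[[_ //]|[A2a _] A1a]; case: (disj _ A1a A2a).
have A1edge e : is_edge G e -> A1 (src G e) -> A1 (tgt G e).
  move=> He A1s; have : (A1 `|` A2) e by rewrite HU.
  case=> [A1e|A2e]; first by have [] := S1 e A1e He.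
  by have [A2s _ _] := S2 e A2e He; case: (disj _ A1s A2s).
have [x A1x Hx] := subgraph_vertex S1 A1n0.
have [y A2y Hy] := subgraph_vertex S2 A2n0.
have [es Hw] := CC R HRc HRcomp x y Hx Hy.
exact: disj (qwalk_closed A1R A1edge Hw A1x) A2y.
Qed.

End UniformSums.

Section QuotientComponent.
Variables (T : uniformType) (G : graph T) (R : set (T * T)) (x : T).

Definition qreach (v : T) : Prop := exists es, qwalk G R x es v.

(** Edges are included in the component of their source, so that it is a
    subgraph. *)
Definition qcomponent : set T :=
  [set v | qreach v \/ is_edge G v /\ qreach (src G v)].

Hypotheses (Rcomp : compatible G R) (x_vertex : ~ is_edge G x).

Let Req : Defs.equiv_rel R. Proof. by case: Rcomp. Qed.

Lemma qreach_tgt (e : T) :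
  is_edge G e -> qreach (src G e) -> qreach (tgt G e).
Proof.
move=> He [es Hw]; exists (es ++ [:: e]).
by apply: qwalk_snoc Req Hw He _; case: Req.
Qed.

Lemma qreach_src (e : T) :
  is_edge G e -> qreach (tgt G e) -> qreach (src G e).
Proof.
move=> He Rt; have [_ [_ [Her [_ [_ [Hsr Htr]]]]]] := graph_ax He.
by rewrite -Htr; apply: qreach_tgt => //; rewrite Hsr.
Qed.

Lemma qreach_rel (a b : T) : qreach a -> R (a, b) -> qreach b.
Proof.
by move=> [es Hw] Rab; exists es; apply: qwalk_ends Req Hw _ Rab; case: Req.
Qed.

Lemma qcomponent_rel (a b : T) : R (a, b) -> qcomponent a -> qcomponent b.
Proof.
have [_ Re Rsrc _] := Rcomp.
move=> Rab [ra|[Ha ra]]; first by left; exact: qreach_rel ra Rab.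
have [Rs _ _] := Rsrc _ _ Ha Rab.
by right; split; [apply/(Re _ _ Rab) | exact: qreach_rel ra Rs].
Qed.

Lemma qcomponent_edge (e : T) :
  is_edge G e -> qcomponent e -> qreach (src G e).
Proof.
move=> He [[es Hw]|[] //].
by case: (qwalk_vertex Rcomp x_vertex Hw).
Qed.

Lemma subgraph_qcomponent : subgraph G qcomponent.
Proof.
move=> e Ae He; have Rs := qcomponent_edge He Ae.
have [_ [_ [Her [_ [_ [Hsr _]]]]]] := graph_ax He.
split; [by left | by left; exact: qreach_tgt |].
by right; split=> //; rewrite Hsr; exact: qreach_tgt.
Qed.

Lemma subgraph_qcomponentC : subgraph G (~` qcomponent).
Proof.
move=> e NAe He; have {}NAe : ~ qcomponent e := NAe.
have [Hs [Ht [Her [_ [_ [Hsr _]]]]]] := graph_ax He.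
split.
- by case=> [rs|[/Hs []]]; apply: NAe; right.
- case=> [rt|[/Ht []]].
  by apply: NAe; right; split=> //; exact: qreach_src.
- move=> /(qcomponent_edge Her); rewrite Hsr => rt.
  by apply: NAe; right; split=> //; exact: qreach_src.
Qed.

Lemma uniform_sum_qcomponent :
  entourage R -> uniform_sum G qcomponent (~` qcomponent).
Proof.
have [[_ Rs _] _ _ _] := Rcomp.
move=> HR; apply/uniform_sumE; split.
- exact: subgraph_qcomponent.
- exact: subgraph_qcomponentC.
- by rewrite setUv.
- by rewrite setICr.
- exact: entourage_saturated_partition HR Rs qcomponent_rel.
Qed.

End QuotientComponent.

Lemma no_uniform_sum_cofinitely_connected (T : uniformType) (G : graph T) :
  ~ (exists A1 A2 : set T, [/\ A1 !=set0, A2 !=set0 & uniform_sum G A1 A2]) ->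
  cofinitely_connected G.
Proof.
move=> Nsum R [HR _ _] Rcomp x y Hx Hy.
apply: contrapT => Nwalk; apply: Nsum.
exists (qcomponent G R x), (~` qcomponent G R x); split.
- by exists x; left; exists nil; have [[Rr _ _] _ _ _] := Rcomp.
- by exists y => -[|[]] //.
- exact: uniform_sum_qcomponent.
Qed.

Section Completion.
Variables (T T' : uniformType) (G : graph T) (G' : graph T') (i : T -> T').
Hypothesis i_edge : forall x, is_edge G' (i x) <-> is_edge G x.
Hypothesis i_morph : forall e, is_edge G e ->
  [/\ i (src G e) = src G' (i e), i (tgt G e) = tgt G' (i e)
    & i (Defs.rev G e) = Defs.rev G' (i e)].
Hypothesis i_entourage : forall W : set (T * T), entourage W <->
  exists2 W' : set (T' * T'), entourage W' &
    forall x y, W' (i x, i y) -> W (x, y).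
Hypothesis i_dense : forall (z : T') (W' : set (T' * T')), entourage W' ->
  exists x, W' (z, i x).

Definition pullback_rel (R' : set (T' * T')) : set (T * T) :=
  [set p | R' (i p.1, i p.2)].

Lemma equiv_rel_pullback (R' : set (T' * T')) :
  Defs.equiv_rel R' -> Defs.equiv_rel (pullback_rel R').
Proof. by move=> [Rr Rs Rt]; split=> [a|a b|a b c] /=; [exact: Rr|exact: Rs|exact: Rt]. Qed.

Lemma cofinite_entourage_pullback (R' : set (T' * T')) :
  cofinite_entourage R' -> cofinite_entourage (pullback_rel R').
Proof.
move=> [HR' Req Rfin]; split; first by apply/i_entourage; exists R'.
  exact: equiv_rel_pullback.
apply: sub_finite_set (finite_image (fun C => i @^-1` C) Rfin).
by move=> C [a _ <-]; exists [set y' | R' (i a, y')]; [exists (i a)|].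
Qed.

Lemma compatible_pullback (R' : set (T' * T')) :
  compatible G' R' -> compatible G (pullback_rel R').
Proof.
move=> [Req Re Rsrc Rrev]; split; first exact: equiv_rel_pullback.
- by move=> a b Rab; rewrite -!i_edge; exact: Re.
- move=> e e' He; rewrite /pullback_rel /= => Ree'.
  have He' : is_edge G e' by apply/i_edge/(Re _ _ Ree')/i_edge.
  have [-> -> ->] := i_morph He; have [-> -> ->] := i_morph He'.
  by apply: Rsrc => //; apply/i_edge.
- move=> e He; rewrite /pullback_rel /=; have [_ _ ->] := i_morph He.
  by apply: Rrev; apply/i_edge.
Qed.

Lemma qwalk_pullback (R' : set (T' * T')) (x : T) (es : seq T) (y : T) :
  qwalk G (pullback_rel R') x es y -> qwalk G' R' (i x) (map i es) (i y).
Proof.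
elim: es x => [|e es IH] x //= [He [Rxs Hw]].
have [s1 t1 _] := i_morph He.
by split; [rewrite i_edge | split; [rewrite -s1 | rewrite -t1; exact: IH]].
Qed.

Lemma cofinitely_connected_completion :
  cofinitely_connected G -> cofinitely_connected G'.
Proof.
move=> CC R' R'cof R'comp x' y' Hx' Hy'.
have [R'ent R'eq _] := R'cof; have [_ R's _] := R'eq.
have [_ R'e _ _] := R'comp.
have [x Rx] := i_dense x' R'ent; have [y Ry] := i_dense y' R'ent.
have Hx : ~ is_edge G x by rewrite -i_edge -(R'e _ _ Rx).
have Hy : ~ is_edge G y by rewrite -i_edge -(R'e _ _ Ry).
have [es Hw] := CC _ (cofinite_entourage_pullback R'cof)
  (compatible_pullback R'comp) x y Hx Hy.
exists (map i es).
exact: qwalk_ends R'eq (qwalk_pullback Hw) Rx (R's _ _ Ry).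
Qed.

(** Each step of a walk in [G'/R'] is matched by an edge of [G] whose image
    is [R']-related to it, by density of [i]. *)
Lemma qwalk_lift (R : set (T * T)) (R' : set (T' * T')) (y : T) :
  entourage R' -> compatible G' R' ->
  (forall a b, R' (i a, i b) -> R (a, b)) ->
  forall (es' : seq T') (w' : T') (z : T),
    R' (i z, w') -> qwalk G' R' w' es' (i y) -> exists es, qwalk G R z es y.
Proof.
move=> R'ent [[_ R's R't] R'e R'src _] back.
elim=> [|e' es' IH] w' z /= Rz.
  by move=> Rw; exists nil; apply: back; exact: R't Rz Rw.
move=> [He' [Rws Hw]].
have [e Re] := i_dense e' R'ent.
have He : is_edge G e by rewrite -i_edge -(R'e _ _ Re).
have [s1 t1 _] := i_morph He.
have [Rs Rt _] := R'src _ _ He' Re.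
have Rte : R' (i (tgt G e), tgt G' e') by rewrite t1; exact: R's _ _ Rt.
have [es Hes] := IH _ _ Rte Hw.
exists (e :: es); split=> //; split=> //.
by apply: back; rewrite s1; exact: R't Rz (R't _ _ _ Rws Rs).
Qed.

Lemma cofinitely_connected_of_completion :
  cofinite_graph G' -> cofinitely_connected G' -> cofinitely_connected G.
Proof.
move=> [_ Hcg'] CC' R [Rent _ _] _ x y Hx Hy.
have [W' HW' W'R] := (i_entourage R).1 Rent.
have [R' [R'cof R'comp R'W']] := Hcg' W' HW'.
have [R'ent [R'r _ _] _] := R'cof.
have back a b : R' (i a, i b) -> R (a, b) by move=> /R'W' /W'R.
have Hix : ~ is_edge G' (i x) by rewrite i_edge.
have Hiy : ~ is_edge G' (i y) by rewrite i_edge.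
have [es' Hw'] := CC' R' R'cof R'comp _ _ Hix Hiy.
exact: qwalk_lift R'ent R'comp back es' _ _ (R'r _) Hw'.
Qed.

End Completion.

Theorem mainTheorem1 (T : uniformType) (G : graph T) (T' : uniformType)
    (G' : graph T') (i : T -> T') :
  cofinite_graph G -> is_completion G G' i ->
  (cofinitely_connected G <->
     ~ (exists A1 A2 : set T,
          [/\ A1 !=set0, A2 !=set0 & uniform_sum G A1 A2])) /\
  (cofinitely_connected G <-> cofinitely_connected G').
Proof.
move=> HG [_ [[i_edge i_morph i_entourage] [i_dense _ HG']]].
split; split.
- by move=> CC [A1 [A2 [A1n0 A2n0]]]; exact: cofinitely_connected_no_uniform_sum.
- exact: no_uniform_sum_cofinitely_connected.
- exact: cofinitely_connected_completion.
- exact: cofinitely_connected_of_completion.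
Qed.
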